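(* Let $\kappa,\ell\ge2$ and $n,m\ge0$. Let $w=(a^{\kappa+1}b^\ell)^na^\kappa$ and $w'=(b^{\ell+1}a^\kappa)^mb^\ell$; for $n=0$ and $m=0$ these are the rank-1 words $a^\kappa$ and $b^\ell$, whose curves are the lines $\mathrm a=\zeta_\kappa$ and $\mathrm b=\zeta_\ell$. Then at the point of $\mathcal D_{\kappa,\ell}$ where the legal arcs of $\mathcal C_w$ and $\mathcal C_{w'}$ intersect, the rotation number is $$\theta(\mathcal C_w\cap\mathcal C_{w'})=\vartheta^-_{\kappa+\ell+1,\,n+m+1}=\frac{n+m+1}{(n+m+1)(\kappa+\ell+1)-1}.$$
   Context: For real parameters $\mathrm a,\mathrm b$, the map $F:\mathbb R^2\to\mathbb R^2$ is $F(x,y)=(\mathrm a x-y,x)$ if $x>0$ or ($x=0$ and $y\le0$), and $F(x,y)=(\mathrm b x-y,x)$ otherwise. Letter $a$ is assigned to points in the open right half-plane or on the negative $y$-axis, and $b$ otherwise. Boundary rays are the $y$ semi-axes. For a word $w=w_0\cdots w_{n-1}$ of odd rank ($\text{rank}=1+|w|_{ab}+|w|_{ba}$): with $Q_{-1}=-1$, $Q_0=0$, $Q_{t+1}=w_tQ_t-Q_{t-1}$ (letters specialised to $\mathrm a,\mathrm b$) and $\mathbf k=\lfloor n/2\rfloor$, the critical curve is $\mathcal C_w=\{C_w=0\}$, where $C_w=Q_{\mathbf k+1}-Q_{\mathbf k}$ ($n$ odd) or $Q_{\mathbf k+1}-Q_{\mathbf k-1}$ ($n$ even). Its legal arc is the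 set of parameter pairs at which $w$ is equivalent (differing only at positions where the orbit lies on a boundary ray) to the symbolic word of the actual $F$-orbit segment between boundary rays. $\theta$ is the rotation number: $\lim_n\frac1n$ times the number of occurrences of $ab$ in the length-$n$ prefix of the symbolic word of any orbit. $\zeta_j=2\cos(\pi/j)$, $\vartheta^-_{j,m}=\frac m{mj-1}$, and $\mathcal D_{\kappa,\ell}=[\zeta_\kappa,\zeta_{\kappa+1}]\times[\zeta_\ell,\zeta_{\ell+1}]$. *)

From Stdlib Require Import Reals Lra List Arith Bool.
Open Scope R_scope.

Inductive letter := La | Lb.

Definition letter_eqb (u v : letter) : bool :=
  match u, v with La, La | Lb, Lb => true | _, _ => false end.

Definition spec (pa pb : R) (u : letter) : R :=
  match u with La => pa | Lb => pb end.

Definition letter_of (p : R * R) : letter :=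
  let (x, y) := p in
  if Rlt_dec 0 x then La
  else if Req_EM_T x 0 then (if Rle_dec y 0 then La else Lb) else Lb.

Definition Fmap (pa pb : R) (p : R * R) : R * R :=
  let (x, y) := p in (spec pa pb (letter_of p) * x - y, x).

Definition orbit (pa pb : R) (t : nat) (p : R * R) : R * R :=
  Nat.iter t (Fmap pa pb) p.

Definition on_boundary (p : R * R) : Prop := fst p = 0.

Definition word := list letter.
Definition wpow (u : word) (k : nat) : word := concat (repeat u k).

(* (Q_{t-1}, Q_t), with Q_{-1} = -1, Q_0 = 0, Q_{t+1} = w_t Q_t - Q_{t-1} *)
Fixpoint Qpair (pa pb : R) (w : word) (t : nat) : R * R :=
  match t with
  | O => (-1, 0)
  | S t' => let (u, v) := Qpair pa pb w t' in
            (v, spec pa pb (nth t' w La) * v - u)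
  end.

Definition Q (pa pb : R) (w : word) (t : nat) : R := snd (Qpair pa pb w t).

Definition Cw (w : word) (pa pb : R) : R :=
  let n := length w in
  let k := Nat.div2 n in
  if Nat.odd n then Q pa pb w (S k) - Q pa pb w k
  else Q pa pb w (S k) - fst (Qpair pa pb w k).

(* starting point of the orbit segment: on the negative y-axis (moving into
   the right half-plane) if w starts with a, on the positive y-axis if w
   starts with b. *)
Definition start_pt (w : word) : R * R :=
  match w with Lb :: _ => (0, 1) | _ => (0, -1) end.

(* legal arc of C_w: points of C_w at which the actual symbolic word of the
   orbit segment agrees with w except at positions on a boundary ray *)
Definition legal_arc (w : word) (pa pb : R) : Prop :=
  Cw w pa pb = 0 /\
  forall t, (t < length w)%nat ->
    on_boundary (orbit pa pb t (start_pt w)) \/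
    letter_of (orbit pa pb t (start_pt w)) = nth t w La.

Definition count_ab (pa pb : R) (p : R * R) (N : nat) : nat :=
  length (filter (fun t => andb (letter_eqb (letter_of (orbit pa pb t p)) La)
                          (letter_eqb (letter_of (orbit pa pb (S t) p)) Lb))
                 (seq 0 (N - 1))).

Definition rotation_number_is (pa pb r : R) : Prop :=
  forall p : R * R, p <> (0, 0) ->
    Un_cv (fun N => INR (count_ab pa pb p N) / INR N) r.

Definition zeta (j : nat) : R := 2 * cos (PI / INR j).

Definition vartheta_minus (j m : nat) : R := INR m / (INR m * INR j - 1).

Definition Dbox (kappa l : nat) (pa pb : R) : Prop :=
  zeta kappa <= pa <= zeta (S kappa) /\ zeta l <= pb <= zeta (S l).

Definition w_left (kappa l n : nat) : word :=
  wpow (repeat La (S kappa) ++ repeat Lb l) n ++ repeat La kappa.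
Definition w_right (kappa l m : nat) : word :=
  wpow (repeat Lb (S l) ++ repeat La kappa) m ++ repeat Lb l.

From Stdlib Require Import Reals Lra Lia List Arith Bool.
Open Scope R_scope.

(* Both words have the form [c :: u] with [u] a palindrome. Each linear step
   (x, y) |-> (c x - y, x) is conjugate to its inverse by the swap
   (x, y) |-> (y, x), so the vanishing of C_w, which says that the orbit of
   (0,-1) along w is swap-symmetric at the middle of u, forces it to end at
   (0,1); by oddness of F, w' then brings (0,1) back to (0,-1). Hence (0,-1)
   is periodic with period |w w'| = (n+m+1)(kappa+l+1) - 1, and its symbolic
   word contains n+m+1 occurrences of ab per period: boundary points do not
   alter this count, because the two neighbours of a point on a boundary ray
   lie in opposite half-planes. Finally F has a monotone degree-one lift to the
   angle, so the ab-counts of two orbits of the same length differ by at most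
   one, and every nonzero orbit has ab-frequency (n+m+1)/|w w'|. *)

Lemma firstn_S_nth {A} (l : list A) d t :
  (t < length l)%nat -> firstn (S t) l = firstn t l ++ nth t l d :: nil.
Proof.
  revert t; induction l as [|x l IH]; intros [|t] Ht; simpl in *; try lia; [reflexivity|].
  rewrite IH by lia; reflexivity.
Qed.

Lemma firstn_add {A} (l : list A) k e :
  firstn (k + e) l = firstn k l ++ firstn e (skipn k l).
Proof.
  revert k; induction l as [|x l IH]; intros [|k]; simpl; rewrite ?firstn_nil; auto.
  now rewrite IH.
Qed.

Lemma palindrome_split {A} (u : list A) k e :
  rev u = u -> length u = (2 * k + e)%nat ->
  u = firstn k u ++ firstn e (skipn k u) ++ rev (firstn k u).
Proof.
  intros Hpal Hlen.
  assert (Htail : skipn e (skipn k u) = rev (firstn k u)).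
  { rewrite skipn_skipn, <- Hpal at 1; rewrite skipn_rev.
    now replace (length u - (e + k))%nat with k by lia. }
  rewrite <- Htail, !firstn_skipn; reflexivity.
Qed.

Lemma last_cons_default {A} (x : A) l d : last (x :: l) d = last l x.
Proof.
  revert x d; induction l as [|y l IH]; intros x d; [reflexivity|].
  change (last (x :: y :: l) d) with (last (y :: l) d); rewrite !IH; reflexivity.
Qed.

Lemma last_app_default {A} (l1 l2 : list A) d : last (l1 ++ l2) d = last l2 (last l1 d).
Proof.
  revert d; induction l1 as [|x l1 IH]; intro d; [reflexivity|].
  rewrite <- app_comm_cons, !last_cons_default; apply IH.
Qed.

Lemma last_repeat {A} (c d : A) k : last (repeat c (S k)) d = c.
Proof. induction k as [|k IH]; [reflexivity|]. exact IH. Qed.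


Definition swap (p : R * R) : R * R := (snd p, fst p).
Definition opp (p : R * R) : R * R := (- fst p, - snd p).

Section Runs.

Variables pa pb : R.

Definition step (c : letter) (p : R * R) : R * R := (spec pa pb c * fst p - snd p, fst p).

Definition run (w : word) (p : R * R) : R * R := fold_left (fun q c => step c q) w p.

Lemma run_app (w1 w2 : word) p : run (w1 ++ w2) p = run w2 (run w1 p).
Proof. apply fold_left_app. Qed.

Lemma run_cons c (w : word) p : run (c :: w) p = run w (step c p).
Proof. reflexivity. Qed.

Lemma step_swap_involutive c p : step c (swap (step c p)) = swap p.
Proof. destruct p; unfold step, swap; simpl; f_equal; ring. Qed.

Lemma run_rev_swap (w : word) p : run (rev w) (swap (run w p)) = swap p.
Proof.
  induction w as [|c w IH] using rev_ind; [reflexivity|].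
  rewrite rev_app_distr, !run_app; simpl rev; simpl app.
  rewrite run_cons; change (run (c :: nil) ?q) with (step c q).
  rewrite step_swap_involutive; exact IH.
Qed.

Lemma run_opp (w : word) p : run w (opp p) = opp (run w p).
Proof.
  revert p; induction w as [|c w IH]; intro p; [reflexivity|].
  rewrite !run_cons, <- IH; f_equal.
  unfold step, opp; simpl; f_equal; ring.
Qed.

Lemma run_palindrome_mirror (v mid : word) p :
  run mid (run v p) = swap (run v p) -> run (v ++ mid ++ rev v) p = swap p.
Proof. intro Hmid; rewrite !run_app, Hmid; apply run_rev_swap. Qed.

Lemma run_short_swap (mid : word) p :
  (length mid <= 1)%nat -> fst (run mid p) = snd p -> run mid p = swap p.
Proof.
  destruct p as [x y]; unfold swap.
  destruct mid as [|c [|]]; simpl; intros Hl Hf; try lia.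
  - now rewrite Hf.
  - unfold step in *; simpl in *; now rewrite Hf.
Qed.

Lemma Fmap_step c p : on_boundary p \/ letter_of p = c -> Fmap pa pb p = step c p.
Proof.
  destruct p as [x y]; unfold on_boundary, step; simpl.
  intros [-> | <-]; [f_equal; ring | reflexivity].
Qed.

End Runs.


(** * The critical curve of a palindromic word *)

Lemma Qpair_cons_run pa pb c0 (u : word) t :
  (t <= length u)%nat -> Qpair pa pb (c0 :: u) (S t) = swap (run pa pb (firstn t u) (1, 0)).
Proof.
  induction t as [|t IH]; intro Ht.
  - unfold swap; simpl; f_equal; ring.
  - change (Qpair pa pb (c0 :: u) (S (S t)))
      with (let (x, y) := Qpair pa pb (c0 :: u) (S t) in (y, spec pa pb (nth t u La) * y - x)).
    rewrite IH by lia; rewrite (firstn_S_nth u La) by lia; rewrite run_app.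
    reflexivity.
Qed.

Lemma Cw_cons_run pa pb c0 (u : word) k e :
  length u = (2 * k + e)%nat -> (e <= 1)%nat ->
  Cw (c0 :: u) pa pb =
  fst (run pa pb (firstn (k + e) u) (1, 0)) - snd (run pa pb (firstn k u) (1, 0)).
Proof.
  intros Hlen He.
  assert (HQ : forall t, (t <= length u)%nat ->
    Q pa pb (c0 :: u) (S t) = fst (run pa pb (firstn t u) (1, 0)) /\
    fst (Qpair pa pb (c0 :: u) (S t)) = snd (run pa pb (firstn t u) (1, 0))).
  { intros t Ht; unfold Q; rewrite Qpair_cons_run by exact Ht; split; reflexivity. }
  assert (HQprev : forall t, Q pa pb (c0 :: u) t = fst (Qpair pa pb (c0 :: u) (S t))).
  { intro t; unfold Q; simpl; destruct (Qpair pa pb (c0 :: u) t); reflexivity. }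
  unfold Cw; simpl length; rewrite Hlen.
  destruct e as [|[|e]]; try lia.
  - rewrite Nat.add_0_r, Nat.div2_succ_double.
    replace (Nat.odd (S (2 * k))) with true
      by (now rewrite <- Nat.add_1_r, Nat.odd_odd).
    rewrite (HQprev k), Nat.add_0_r.
    destruct (HQ k) as [-> ->]; [lia | reflexivity].
  - replace (S (2 * k + 1)) with (2 * S k)%nat by lia.
    rewrite Nat.div2_double, Nat.odd_even.
    replace (S k) with (k + 1)%nat at 1 by lia.
    destruct (HQ (k + 1)%nat) as [-> _]; [lia|].
    destruct (HQ k) as [_ ->]; [lia | reflexivity].
Qed.

Lemma critical_palindrome_run pa pb c0 (u : word) :
  rev u = u -> Cw (c0 :: u) pa pb = 0 -> run pa pb u (1, 0) = (0, 1).
Proof.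
  intros Hpal HC.
  set (k := Nat.div2 (length u)); set (e := Nat.b2n (Nat.odd (length u))).
  assert (Hlen : length u = (2 * k + e)%nat) by apply Nat.div2_odd.
  assert (He : (e <= 1)%nat) by (unfold e; destruct Nat.odd; simpl; lia).
  rewrite (Cw_cons_run pa pb c0 u k e Hlen He), firstn_add, run_app in HC.
  rewrite (palindrome_split u k e Hpal Hlen).
  apply run_palindrome_mirror, run_short_swap; [|lra].
  rewrite length_firstn; lia.
Qed.


Lemma orbit_S pa pb t p : orbit pa pb (S t) p = Fmap pa pb (orbit pa pb t p).
Proof. reflexivity. Qed.

Lemma orbit_add pa pb s t p : orbit pa pb (s + t) p = orbit pa pb s (orbit pa pb t p).
Proof. apply Nat.iter_add. Qed.

Lemma legal_arc_orbit_run pa pb (w : word) :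
  legal_arc w pa pb -> forall t, (t <= length w)%nat ->
  orbit pa pb t (start_pt w) = run pa pb (firstn t w) (start_pt w).
Proof.
  intros [_ Hlegal] t; induction t as [|t IH]; intro Ht; [reflexivity|].
  rewrite orbit_S, (firstn_S_nth w La), run_app, <- IH by lia.
  apply Fmap_step, Hlegal; lia.
Qed.

Lemma legal_palindrome_half_turn pa pb c0 (u : word) :
  rev u = u -> legal_arc (c0 :: u) pa pb ->
  orbit pa pb (length (c0 :: u)) (start_pt (c0 :: u)) = opp (start_pt (c0 :: u)).
Proof.
  intros Hpal Hlegal.
  rewrite (legal_arc_orbit_run pa pb _ Hlegal), firstn_all, run_cons by lia.
  pose proof (critical_palindrome_run pa pb c0 u Hpal (proj1 Hlegal)) as Hrun.
  destruct c0; unfold step, opp; simpl.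
  - replace (pa * 0 - -1, 0) with (1, 0) by (f_equal; ring).
    rewrite Hrun; f_equal; ring.
  - replace (pb * 0 - 1, 0) with (opp (1, 0)) by (unfold opp; f_equal; simpl; ring).
    rewrite run_opp, Hrun; unfold opp; simpl; f_equal; ring.
Qed.

Definition itinerary pa pb (p : R * R) (t : nat) : letter := letter_of (orbit pa pb t p).

Lemma legal_arc_concat pa pb (w1 w2 : word) :
  legal_arc w1 pa pb -> legal_arc w2 pa pb ->
  orbit pa pb (length w1) (start_pt w1) = start_pt w2 ->
  forall t, (t < length w1 + length w2)%nat ->
  on_boundary (orbit pa pb t (start_pt w1)) \/
  itinerary pa pb (start_pt w1) t = nth t (w1 ++ w2) La.
Proof.
  intros [_ H1] [_ H2] Hjoin t Ht.
  destruct (Nat.lt_ge_cases t (length w1)) as [Hlt | Hge].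
  - rewrite app_nth1 by exact Hlt; apply H1, Hlt.
  - unfold itinerary.
    replace t with (t - length w1 + length w1)%nat by lia.
    rewrite app_nth2, orbit_add, Hjoin by lia.
    replace (t - length w1 + length w1 - length w1)%nat with (t - length w1)%nat by lia.
    apply H2; lia.
Qed.


Lemma wpow_S (u : word) n : wpow u (S n) = u ++ wpow u n.
Proof. reflexivity. Qed.

Lemma wpow_shift (Y Z : word) n : Y ++ wpow (Z ++ Y) n = wpow (Y ++ Z) n ++ Y.
Proof.
  induction n as [|n IH]; [simpl; now rewrite app_nil_r|].
  rewrite !wpow_S, <- (app_assoc Z Y), IH, !app_assoc; reflexivity.
Qed.

Lemma rev_wpow (Y : word) n : rev (wpow Y n) = wpow (rev Y) n.
Proof.
  induction n as [|n IH]; [reflexivity|].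
  rewrite wpow_S, rev_app_distr, IH, wpow_S.
  symmetry; pose proof (wpow_shift (rev Y) nil n) as Hcomm.
  now rewrite app_nil_r in Hcomm.
Qed.

Lemma length_wpow (Y : word) n : length (wpow Y n) = (n * length Y)%nat.
Proof. induction n as [|n IH]; [reflexivity|]. rewrite wpow_S, length_app, IH; lia. Qed.

Lemma wpow_palindrome (Y Z : word) n :
  rev Y = Y -> rev Z = Z -> rev (wpow (Y ++ Z) n ++ Y) = wpow (Y ++ Z) n ++ Y.
Proof.
  intros HY HZ.
  rewrite rev_app_distr, rev_wpow, rev_app_distr, HY, HZ; apply wpow_shift.
Qed.

Lemma block_word_palindromic (c d : letter) k j n :
  exists u, wpow (repeat c (S (S k)) ++ repeat d j) n ++ repeat c (S k) = c :: u /\ rev u = u.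
Proof.
  set (Z := c :: repeat d j ++ c :: nil).
  exists (wpow (repeat c k ++ Z) n ++ repeat c k); split.
  - assert (HZ : (repeat c (S k) ++ repeat d j) ++ c :: nil = repeat c k ++ Z).
    { change (repeat c (S k)) with (c :: repeat c k).
      rewrite repeat_cons, <- !app_assoc; reflexivity. }
    pose proof (wpow_shift (c :: nil) (repeat c (S k) ++ repeat d j) n) as Hshift.
    rewrite HZ in Hshift.
    change ((c :: nil) ++ repeat c (S k) ++ repeat d j)
      with (repeat c (S (S k)) ++ repeat d j) in Hshift.
    change (repeat c (S k)) with ((c :: nil) ++ repeat c k).
    rewrite app_assoc, <- Hshift; reflexivity.
  - apply wpow_palindrome; [apply rev_repeat|].
    unfold Z; simpl; rewrite rev_app_distr, rev_repeat; reflexivity.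
Qed.

Lemma length_block_words kappa l n m :
  (length (w_left kappa l n ++ w_right kappa l m) + 1 = (n + m + 1) * (kappa + l + 1))%nat.
Proof.
  unfold w_left, w_right; rewrite !length_app, !length_wpow, !length_app, !repeat_length; nia.
Qed.


Definition is_ab (x y : letter) : bool := letter_eqb x La && letter_eqb y Lb.

Fixpoint ab_pairs (p : letter) (w : word) : nat :=
  match w with
  | nil => 0
  | x :: w' => Nat.b2n (is_ab p x) + ab_pairs x w'
  end.

Lemma ab_pairs_app p (w1 w2 : word) :
  ab_pairs p (w1 ++ w2) = (ab_pairs p w1 + ab_pairs (last w1 p) w2)%nat.
Proof.
  revert p; induction w1 as [|x w1 IH]; intro p; [reflexivity|].
  cbn [app ab_pairs]; rewrite IH, last_cons_default; lia.
Qed.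

Lemma last_wpow (Y : word) p n : last Y p = p -> last (wpow Y n) p = p.
Proof.
  intro HY; induction n as [|n IH]; [reflexivity|].
  rewrite wpow_S, last_app_default, HY; exact IH.
Qed.

Lemma ab_pairs_wpow p (Y : word) n :
  last Y p = p -> ab_pairs p (wpow Y n) = (n * ab_pairs p Y)%nat.
Proof.
  intro HY; induction n as [|n IH]; [reflexivity|].
  rewrite wpow_S, ab_pairs_app, HY, IH; lia.
Qed.

Lemma ab_pairs_repeat_self c k : ab_pairs c (repeat c k) = 0%nat.
Proof. induction k as [|k IH]; simpl; [|rewrite IH; destruct c]; reflexivity. Qed.

Lemma ab_pairs_repeat p c k : ab_pairs p (repeat c (S k)) = Nat.b2n (is_ab p c).
Proof. simpl; rewrite ab_pairs_repeat_self; lia. Qed.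

Lemma ab_pairs_block_words k j n m :
  ab_pairs Lb (w_left (S k) (S j) n ++ w_right (S k) (S j) m) = (n + m + 1)%nat.
Proof.
  unfold w_left, w_right.
  set (Yl := repeat La (S (S k)) ++ repeat Lb (S j)).
  set (Yr := repeat Lb (S (S j)) ++ repeat La (S k)).
  assert (HYl : last Yl Lb = Lb) by (unfold Yl; rewrite last_app_default; apply last_repeat).
  assert (HYr : last Yr La = La) by (unfold Yr; rewrite last_app_default; apply last_repeat).
  assert (Hl : ab_pairs Lb Yl = 1%nat)
    by (unfold Yl; rewrite ab_pairs_app, last_repeat, !ab_pairs_repeat; reflexivity).
  assert (Hr : ab_pairs La Yr = 1%nat)
    by (unfold Yr; rewrite ab_pairs_app, last_repeat, !ab_pairs_repeat; reflexivity).
  rewrite !ab_pairs_app, !last_app_default, !last_repeat, (last_wpow Yl Lb n HYl),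
    (last_wpow Yr La m HYr), (ab_pairs_wpow Lb Yl n HYl), (ab_pairs_wpow La Yr m HYr), Hl, Hr,
    !ab_pairs_repeat; simpl; lia.
Qed.

Fixpoint count_upto (g : nat -> bool) (N : nat) : nat :=
  match N with
  | O => O
  | S N' => (count_upto g N' + Nat.b2n (g N'))%nat
  end.

Lemma count_upto_le g N : (count_upto g N <= N)%nat.
Proof. induction N as [|N IH]; simpl; [lia|]. destruct (g N); simpl; lia. Qed.

Lemma count_upto_shift g N :
  count_upto g (S N) = (Nat.b2n (g O) + count_upto (fun t => g (S t)) N)%nat.
Proof. induction N as [|N IH]; [simpl; lia|]. simpl in *; rewrite IH; lia. Qed.

Lemma count_upto_add g P t :
  count_upto g (P + t) = (count_upto g P + count_upto (fun s => g (P + s)%nat) t)%nat.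
Proof.
  induction t as [|t IH]; [simpl; rewrite Nat.add_0_r; lia|].
  rewrite Nat.add_succ_r; simpl; rewrite IH; lia.
Qed.

Lemma count_upto_ext g h N : (forall t, g t = h t) -> count_upto g N = count_upto h N.
Proof. intro Hgh; induction N as [|N IH]; simpl; [reflexivity|]; now rewrite IH, Hgh. Qed.

Definition ab_count (f : nat -> letter) (N : nat) : nat :=
  count_upto (fun t => is_ab (f t) (f (S t))) N.

Lemma ab_count_S f N : ab_count f (S N) = (ab_count f N + Nat.b2n (is_ab (f N) (f (S N))))%nat.
Proof. reflexivity. Qed.

Lemma ab_pairs_nth p (w : word) :
  ab_pairs p w = (Nat.b2n (is_ab p (nth 0 w La)) + ab_count (fun t => nth t w La) (length w))%nat.
Proof.
  revert p; induction w as [|x w IH]; intro p; [destruct p; reflexivity|].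
  unfold ab_count; simpl length; rewrite count_upto_shift; simpl; rewrite IH; reflexivity.
Qed.

Lemma letter_eq_dec (u v : letter) : {u = v} + {u <> v}.
Proof. decide equality. Defined.

Lemma is_ab_middle x y z :
  x <> z -> (Nat.b2n (is_ab x y) + Nat.b2n (is_ab y z))%nat = Nat.b2n (is_ab x z).
Proof. destruct x, y, z; simpl; congruence. Qed.

Lemma ab_count_isolated_changes (f g : nat -> letter) N :
  f O = g O -> f N = g N ->
  (forall t, (S t < N)%nat -> f (S t) <> g (S t) ->
     f t = g t /\ f (S (S t)) = g (S (S t)) /\ f t <> f (S (S t))) ->
  ab_count f N = ab_count g N.
Proof.
  intros H0 HN Hisolated.
  enough (H : forall M, (M <= N)%nat -> f M = g M -> ab_count f M = ab_count g M) by auto.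
  induction M as [M IH] using lt_wf_ind; intros HM HfgM.
  destruct M as [|M]; [reflexivity|].
  destruct (letter_eq_dec (f M) (g M)) as [HfgM' | Hne].
  - rewrite !ab_count_S, IH, HfgM, HfgM' by (lia || exact HfgM'); reflexivity.
  - destruct M as [|M]; [contradiction|].
    destruct (Hisolated M) as (Hfg & _ & Hflip); [lia | exact Hne |].
    rewrite !ab_count_S, <- !Nat.add_assoc, is_ab_middle, is_ab_middle by congruence.
    rewrite IH, Hfg, HfgM by (lia || exact Hfg); reflexivity.
Qed.


(** * The periodic orbit *)

Lemma letter_of_pos x y : 0 < x -> letter_of (x, y) = La.
Proof. intro H; unfold letter_of; destruct (Rlt_dec 0 x); [reflexivity | lra]. Qed.

Lemma letter_of_neg x y : x < 0 -> letter_of (x, y) = Lb.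
Proof.
  intro H; unfold letter_of; destruct (Rlt_dec 0 x); [lra|].
  destruct (Req_EM_T x 0); [lra | reflexivity].
Qed.

Lemma letter_of_axis_down : letter_of (0, -1) = La.
Proof.
  unfold letter_of; destruct (Rlt_dec 0 0); [lra|].
  destruct (Req_EM_T 0 0); [|lra]; destruct (Rle_dec (-1) 0); [reflexivity | lra].
Qed.

Lemma orbit_nonzero pa pb t p : p <> (0, 0) -> orbit pa pb t p <> (0, 0).
Proof.
  intro Hp; induction t as [|t IH]; [exact Hp|].
  rewrite orbit_S; destruct (orbit pa pb t p) as [x y]; simpl.
  intro E; injection E as E1 E2; subst x.
  apply IH; f_equal; lra.
Qed.

Lemma boundary_neighbours pa pb p t :
  p <> (0, 0) -> on_boundary (orbit pa pb (S t) p) ->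
  fst (orbit pa pb (S (S t)) p) = - fst (orbit pa pb t p) /\ fst (orbit pa pb t p) <> 0.
Proof.
  unfold on_boundary; intros Hp Hx.
  pose proof (orbit_nonzero pa pb (S t) p Hp) as Hnz.
  rewrite !orbit_S in *.
  destruct (orbit pa pb t p) as [x y]; simpl in *.
  rewrite Hx; split; [ring|].
  intros ->; apply Hnz; f_equal; lra.
Qed.

Lemma count_ab_itinerary pa pb p N : count_ab pa pb p (S N) = ab_count (itinerary pa pb p) N.
Proof.
  unfold count_ab; rewrite Nat.sub_1_r; simpl Nat.pred.
  induction N as [|N IH]; [reflexivity|].
  rewrite seq_S, filter_app, length_app, IH, ab_count_S; simpl.
  unfold itinerary, is_ab; rewrite orbit_S; destruct (_ && _); reflexivity.
Qed.

Lemma periodic_itinerary_ab_count pa pb p (W : word) :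
  p <> (0, 0) -> letter_of p = La -> nth 0 W La = La ->
  orbit pa pb (length W) p = p ->
  (forall t, (t < length W)%nat ->
     on_boundary (orbit pa pb t p) \/ itinerary pa pb p t = nth t W La) ->
  ab_count (itinerary pa pb p) (length W) = ab_pairs Lb W.
Proof.
  intros Hp Hp0 HW0 Hper Hagree.
  rewrite ab_pairs_nth; simpl Nat.b2n.
  assert (Hend : itinerary pa pb p (length W) = nth (length W) W La)
    by (unfold itinerary; rewrite Hper, nth_overflow; auto).
  assert (Hoff : forall t, (t <= length W)%nat -> ~ on_boundary (orbit pa pb t p) ->
                 itinerary pa pb p t = nth t W La).
  { intros t Ht Hx; destruct (Nat.eq_dec t (length W)) as [-> | Hne]; [exact Hend|].
    destruct (Hagree t) as [Hb | Hb]; [lia | contradiction | exact Hb]. }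
  apply ab_count_isolated_changes; [exact (eq_trans Hp0 (eq_sym HW0)) | exact Hend |].
  intros t Ht Hne.
  assert (Hx : on_boundary (orbit pa pb (S t) p))
    by (destruct (Hagree (S t)) as [Hb | Hb]; [lia | exact Hb | contradiction]).
  destruct (boundary_neighbours pa pb p t Hp Hx) as [Hflip Hprev].
  unfold on_boundary in Hoff.
  split; [apply Hoff; lia || lra|]; split; [apply Hoff; lia || lra|].
  unfold itinerary.
  destruct (orbit pa pb t p) as [x y] eqn:Ht'; destruct (orbit pa pb (S (S t)) p) as [x' y'].
  simpl in Hflip, Hprev.
  destruct (Rlt_dec 0 x).
  - rewrite letter_of_pos, letter_of_neg by lra; discriminate.
  - rewrite letter_of_neg, letter_of_pos by lra; discriminate.
Qed.

Lemma block_words_periodic_orbit pa pb k j n m :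
  legal_arc (w_left (S k) (S j) n) pa pb -> legal_arc (w_right (S k) (S j) m) pa pb ->
  let W := w_left (S k) (S j) n ++ w_right (S k) (S j) m in
  orbit pa pb (length W) (0, -1) = (0, -1) /\
  ab_count (itinerary pa pb (0, -1)) (length W) = (n + m + 1)%nat.
Proof.
  intros Hleft Hright W.
  destruct (block_word_palindromic La Lb k (S j) n) as (u1 & Hw1 & Hpal1).
  destruct (block_word_palindromic Lb La j (S k) m) as (u2 & Hw2 & Hpal2).
  change (w_left (S k) (S j) n = La :: u1) in Hw1.
  change (w_right (S k) (S j) m = Lb :: u2) in Hw2.
  assert (Hcount : ab_pairs Lb W = (n + m + 1)%nat) by apply ab_pairs_block_words.
  unfold W in *; rewrite Hw1, Hw2 in *.
  pose proof (legal_palindrome_half_turn pa pb La u1 Hpal1 Hleft) as Hhalf1.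
  pose proof (legal_palindrome_half_turn pa pb Lb u2 Hpal2 Hright) as Hhalf2.
  cbn [start_pt] in Hhalf1, Hhalf2.
  replace (opp (0, -1)) with (0, 1) in Hhalf1 by (unfold opp; simpl; f_equal; ring).
  replace (opp (0, 1)) with (0, -1) in Hhalf2 by (unfold opp; simpl; f_equal; ring).
  assert (Hper : orbit pa pb (length ((La :: u1) ++ Lb :: u2)) (0, -1) = (0, -1)).
  { rewrite length_app, Nat.add_comm, orbit_add, Hhalf1; exact Hhalf2. }
  split; [exact Hper|].
  rewrite <- Hcount; apply periodic_itinerary_ab_count.
  - intro E; injection E; lra.
  - exact letter_of_axis_down.
  - reflexivity.
  - exact Hper.
  - intros t Ht; rewrite length_app in Ht.
    exact (legal_arc_concat pa pb (La :: u1) (Lb :: u2) Hleft Hright Hhalf1 t Ht).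
Qed.


(** * The angle lift *)

(* The angle in half-turns, increasing counterclockwise from the positive
   y-axis: the points labelled b fill [0,1) and those labelled a fill [1,2). *)
Definition angle (p : R * R) : R :=
  let (x, y) := p in
  if Rlt_dec 0 x then 3/2 + atan (y / x) / PI
  else if Rlt_dec x 0 then 1/2 + atan (y / x) / PI
  else if Rlt_dec 0 y then 0 else 1.

(* The action on angles of the shear (x, y) |-> (x, y - c x), with c = pb on
   [0,1) and c = pa on [1,2). *)
Definition shear_lift (pa pb s : R) : R :=
  if Rle_dec s 0 then 0
  else if Rlt_dec s 1 then 1/2 + atan (tan (PI * (s - 1/2)) - pb) / PI
  else if Rle_dec s 1 then 1
  else 3/2 + atan (tan (PI * (s - 3/2)) - pa) / PI.

Lemma atan_div_PI_bound z : -1/2 < atan z / PI < 1/2.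
Proof.
  pose proof (atan_bound z); pose proof PI_RGT_0.
  assert (E : atan z / PI * PI = atan z) by (field; lra).
  split; nra.
Qed.

Lemma angle_range p : 0 <= angle p < 2.
Proof.
  destruct p as [x y]; unfold angle; pose proof (atan_div_PI_bound (y / x)).
  destruct (Rlt_dec 0 x); [lra|]. destruct (Rlt_dec x 0); [lra|].
  destruct (Rlt_dec 0 y); lra.
Qed.

Lemma angle_pos x y : 0 < x -> angle (x, y) = 3/2 + atan (y / x) / PI.
Proof. intro H; unfold angle; destruct (Rlt_dec 0 x); [reflexivity | lra]. Qed.

Lemma angle_neg x y : x < 0 -> angle (x, y) = 1/2 + atan (y / x) / PI.
Proof.
  intro H; unfold angle; destruct (Rlt_dec 0 x); [lra|].
  destruct (Rlt_dec x 0); [reflexivity | lra].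
Qed.

Lemma angle_axis_down y : y <= 0 -> angle (0, y) = 1.
Proof.
  intro H; unfold angle; destruct (Rlt_dec 0 0); [lra|].
  destruct (Rlt_dec 0 0); [lra|]. destruct (Rlt_dec 0 y); [lra | reflexivity].
Qed.

Lemma angle_axis_up y : 0 < y -> angle (0, y) = 0.
Proof.
  intro H; unfold angle; destruct (Rlt_dec 0 0); [lra|].
  destruct (Rlt_dec 0 0); [lra|]. destruct (Rlt_dec 0 y); [reflexivity | lra].
Qed.

Lemma shear_lift_range pa pb s :
  (0 <= s < 1 -> 0 <= shear_lift pa pb s < 1) /\ (1 <= s < 2 -> 1 <= shear_lift pa pb s < 2).
Proof.
  unfold shear_lift.
  pose proof (atan_div_PI_bound (tan (PI * (s - 1/2)) - pb)).
  pose proof (atan_div_PI_bound (tan (PI * (s - 3/2)) - pa)).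
  destruct (Rle_dec s 0); [split; intro; lra|].
  destruct (Rlt_dec s 1); [split; intro; lra|].
  destruct (Rle_dec s 1); split; intro; lra.
Qed.

Lemma atan_tan_shift_mono c u v :
  -1/2 < u -> u <= v -> v < 1/2 ->
  atan (tan (PI * u) - c) / PI <= atan (tan (PI * v) - c) / PI.
Proof.
  intros Hu Huv Hv; pose proof PI_RGT_0.
  destruct (Req_dec u v) as [-> | Hne]; [lra|].
  apply Rmult_le_compat_r; [left; apply Rinv_0_lt_compat; lra|].
  left; apply atan_increasing.
  apply Rplus_lt_compat_r, tan_increasing; nra.
Qed.

Lemma shear_lift_mono pa pb s1 s2 :
  0 <= s1 -> s1 <= s2 -> s2 < 2 -> shear_lift pa pb s1 <= shear_lift pa pb s2.
Proof.
  intros H1 H12 H2.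
  destruct (Rlt_dec s1 1) as [L1 | L1]; destruct (Rlt_dec s2 1) as [L2 | L2]; [| | lra |].
  - unfold shear_lift.
    pose proof (atan_div_PI_bound (tan (PI * (s2 - 1/2)) - pb)).
    destruct (Rle_dec s1 0); destruct (Rle_dec s2 0); try lra;
      destruct (Rlt_dec s2 1); try lra.
    destruct (Rlt_dec s1 1); [|lra].
    apply Rplus_le_compat_l, atan_tan_shift_mono; lra.
  - destruct (shear_lift_range pa pb s1) as [A _]; destruct (shear_lift_range pa pb s2) as [_ B].
    specialize (A ltac:(lra)); specialize (B ltac:(lra)); lra.
  - unfold shear_lift.
    pose proof (atan_div_PI_bound (tan (PI * (s2 - 3/2)) - pa)).
    destruct (Rle_dec s1 0); [lra|]; destruct (Rle_dec s2 0); [lra|].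
    destruct (Rlt_dec s1 1); [lra|]; destruct (Rlt_dec s2 1); [lra|].
    destruct (Rle_dec s1 1); destruct (Rle_dec s2 1); try lra.
    apply Rplus_le_compat_l, atan_tan_shift_mono; lra.
Qed.

Lemma angle_shear pa pb x y :
  (x, y) <> (0, 0) ->
  angle (x, y - spec pa pb (letter_of (x, y)) * x) = shear_lift pa pb (angle (x, y)).
Proof.
  intro Hnz; pose proof PI_RGT_0.
  destruct (Rtotal_order x 0) as [Hx | [-> | Hx]].
  - rewrite letter_of_neg, !angle_neg by lra; simpl spec.
    pose proof (atan_div_PI_bound (y / x)).
    unfold shear_lift; destruct (Rle_dec _ 0); [lra|]; destruct (Rlt_dec _ 1); [|lra].
    replace (PI * (1/2 + atan (y / x) / PI - 1/2)) with (atan (y / x)) by (field; lra).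
    rewrite tan_atan; do 3 f_equal; field; lra.
  - rewrite Rmult_0_r, Rminus_0_r.
    destruct (Rle_dec y 0).
    + rewrite angle_axis_down by lra; unfold shear_lift.
      destruct (Rle_dec 1 0); [lra|]; destruct (Rlt_dec 1 1); [lra|].
      destruct (Rle_dec 1 1); [reflexivity | lra].
    + rewrite angle_axis_up by lra; unfold shear_lift.
      destruct (Rle_dec 0 0); [reflexivity | lra].
  - rewrite letter_of_pos, !angle_pos by lra; simpl spec.
    pose proof (atan_div_PI_bound (y / x)).
    unfold shear_lift; destruct (Rle_dec _ 0); [lra|]; destruct (Rlt_dec _ 1); [lra|].
    destruct (Rle_dec _ 1); [lra|].
    replace (PI * (3/2 + atan (y / x) / PI - 3/2)) with (atan (y / x)) by (field; lra).
    rewrite tan_atan; do 3 f_equal; field; lra.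
Qed.

(* The quarter turn adds [1/2] to the angle, except that it wraps around [2]
   exactly on the closed quadrant [x > 0, y >= 0]. *)
Lemma angle_quarter_turn x y :
  (x, y) <> (0, 0) ->
  angle (- y, x) + 2 * (if Rlt_dec 0 x then if Rle_dec 0 y then 1 else 0 else 0) =
  angle (x, y) + 1/2.
Proof.
  intro Hnz; pose proof PI_RGT_0.
  destruct (Rtotal_order x 0) as [Hx | [Hx | Hx]];
    (destruct (Rlt_dec 0 x); try lra);
    destruct (Rtotal_order y 0) as [Hy | [Hy | Hy]];
    try (destruct (Rle_dec 0 y); try lra).
  - rewrite angle_pos, angle_neg by lra.
    assert (Hp : 0 < y / x)
      by (replace (y / x) with (- y / - x) by (field; lra); apply Rdiv_lt_0_compat; lra).
    replace (x / - y) with (- / (y / x)) by (field; lra).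
    rewrite atan_opp, atan_inv by exact Hp; field; lra.
  - subst y; rewrite Ropp_0, angle_axis_down, angle_neg by lra.
    replace (0 / x) with 0 by (field; lra); rewrite atan_0; field; lra.
  - rewrite !angle_neg by lra.
    assert (Hp : 0 < - (y / x))
      by (replace (- (y / x)) with (y / - x) by (field; lra); apply Rdiv_lt_0_compat; lra).
    replace (x / - y) with (/ - (y / x)) by (field; lra).
    rewrite atan_inv, atan_opp by exact Hp; field; lra.
  - subst x; rewrite angle_axis_down, angle_pos by lra.
    replace (0 / - y) with 0 by (field; lra); rewrite atan_0; field; lra.
  - subst x y; exfalso; apply Hnz; reflexivity.
  - subst x; rewrite angle_axis_up, angle_neg by lra.
    replace (0 / - y) with 0 by (field; lra); rewrite atan_0; field; lra.
  - rewrite !angle_pos by lra.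
    assert (Hp : 0 < - (y / x))
      by (replace (- (y / x)) with (- y / x) by (field; lra); apply Rdiv_lt_0_compat; lra).
    replace (x / - y) with (/ - (y / x)) by (field; lra).
    rewrite atan_inv, atan_opp by exact Hp; field; lra.
  - subst y; rewrite Ropp_0, angle_axis_up, angle_pos by lra.
    replace (0 / x) with 0 by (field; lra); rewrite atan_0; field; lra.
  - rewrite angle_neg, angle_pos by lra.
    assert (Hp : 0 < y / x) by (apply Rdiv_lt_0_compat; lra).
    replace (x / - y) with (- / (y / x)) by (field; lra).
    rewrite atan_opp, atan_inv by exact Hp; field; lra.
Qed.

Lemma is_ab_Fmap_iff pa pb x y :
  is_ab (letter_of (x, y)) (letter_of (Fmap pa pb (x, y))) = true <->
  0 < x /\ fst (Fmap pa pb (x, y)) <= 0.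
Proof.
  unfold is_ab; change (Fmap pa pb (x, y)) with (spec pa pb (letter_of (x, y)) * x - y, x).
  cbn [fst].
  destruct (Rtotal_order x 0) as [Hx | [-> | Hx]].
  - rewrite letter_of_neg by lra; split; [discriminate | lra].
  - unfold letter_of at 1; destruct (Rlt_dec 0 0); [lra|]; destruct (Req_EM_T 0 0); [|lra].
    destruct (Rle_dec y 0); cbn [letter_eqb andb]; [|split; [discriminate | lra]].
    rewrite Rmult_0_r, Rminus_0_l.
    destruct (Rtotal_order (- y) 0) as [H | [H | H]]; [lra | |].
    + unfold letter_of; rewrite H; destruct (Rlt_dec 0 0); [lra|].
      destruct (Req_EM_T 0 0); [|lra]; destruct (Rle_dec 0 0); [|lra].
      split; [discriminate | lra].
    + rewrite letter_of_pos by lra; split; [discriminate | lra].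
  - rewrite letter_of_pos by lra; simpl spec; cbn [letter_eqb andb].
    destruct (Rlt_dec 0 (pa * x - y)).
    + rewrite letter_of_pos by lra; split; [discriminate | lra].
    + unfold letter_of; destruct (Rlt_dec 0 (pa * x - y)); [lra|].
      destruct (Req_EM_T (pa * x - y) 0); [|split; [lra | reflexivity]].
      destruct (Rle_dec x 0); [lra|]; split; [lra | reflexivity].
Qed.

(* F is the shear followed by the quarter turn (x, y) |-> (-y, x). *)
Lemma angle_Fmap pa pb p :
  p <> (0, 0) ->
  angle (Fmap pa pb p) + 2 * INR (Nat.b2n (is_ab (letter_of p) (letter_of (Fmap pa pb p)))) =
  shear_lift pa pb (angle p) + 1/2.
Proof.
  destruct p as [x y]; intro Hnz.
  set (c := spec pa pb (letter_of (x, y))).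
  assert (HF : Fmap pa pb (x, y) = (- (y - c * x), x)) by (unfold Fmap, c; f_equal; ring).
  assert (Hsheared : (x, y - c * x) <> (0, 0)).
  { intro E; injection E as E1 E2; apply Hnz; subst x; f_equal; lra. }
  rewrite <- (angle_shear pa pb x y Hnz); fold c.
  rewrite <- (angle_quarter_turn x (y - c * x) Hsheared), HF; do 2 f_equal.
  pose proof (is_ab_Fmap_iff pa pb x y) as Hiff; rewrite HF in Hiff; simpl fst in Hiff.
  destruct (is_ab _ _); simpl.
  - destruct (proj1 Hiff eq_refl) as [Hx Hy].
    destruct (Rlt_dec 0 x); [|lra]; destruct (Rle_dec 0 (y - c * x)); [reflexivity | lra].
  - destruct (Rlt_dec 0 x); [|reflexivity]; destruct (Rle_dec 0 (y - c * x)); [|reflexivity].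
    discriminate (proj2 Hiff ltac:(lra)).
Qed.

Section Lift.

Variables pa pb : R.

(* Each ab-transition is a full turn of the orbit, i.e. 2 in angle units. *)
Definition lift (p : R * R) (t : nat) : R :=
  2 * INR (ab_count (itinerary pa pb p) t) + angle (orbit pa pb t p).

Lemma lift_S p t :
  p <> (0, 0) ->
  lift p (S t) =
  2 * INR (ab_count (itinerary pa pb p) t) + shear_lift pa pb (angle (orbit pa pb t p)) + 1/2.
Proof.
  intro Hp; unfold lift; rewrite ab_count_S, plus_INR.
  pose proof (angle_Fmap pa pb (orbit pa pb t p) (orbit_nonzero pa pb t p Hp)).
  unfold itinerary at 2 3; rewrite orbit_S in *; lra.
Qed.

Lemma shear_lift_mono_shifted (K1 K2 : nat) s1 s2 :
  0 <= s1 < 2 -> 0 <= s2 < 2 -> 2 * INR K1 + s1 <= 2 * INR K2 + s2 ->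
  2 * INR K1 + shear_lift pa pb s1 <= 2 * INR K2 + shear_lift pa pb s2.
Proof.
  intros H1 H2 H.
  destruct (lt_eq_lt_dec K1 K2) as [[L | <-] | L].
  - apply le_INR in L; rewrite S_INR in L.
    destruct (shear_lift_range pa pb s1) as [A1 B1].
    destruct (shear_lift_range pa pb s2) as [A2 B2].
    destruct (Rlt_dec s1 1); destruct (Rlt_dec s2 1);
      [specialize (A1 ltac:(lra)); specialize (A2 ltac:(lra)) |
       specialize (A1 ltac:(lra)); specialize (B2 ltac:(lra)) |
       specialize (B1 ltac:(lra)); specialize (A2 ltac:(lra)) |
       specialize (B1 ltac:(lra)); specialize (B2 ltac:(lra))]; lra.
  - apply Rplus_le_compat_l, shear_lift_mono; lra.
  - apply le_INR in L; rewrite S_INR in L; lra.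
Qed.

Lemma lift_order_preserved p q (j1 j2 : nat) :
  p <> (0, 0) -> q <> (0, 0) ->
  2 * INR j1 + angle p <= 2 * INR j2 + angle q ->
  forall t, 2 * INR j1 + lift p t <= 2 * INR j2 + lift q t.
Proof.
  intros Hp Hq H0 t; induction t as [|t IH]; [unfold lift; simpl; lra|].
  rewrite !lift_S by assumption; unfold lift in IH.
  pose proof (shear_lift_mono_shifted (ab_count (itinerary pa pb p) t + j1)
    (ab_count (itinerary pa pb q) t + j2) _ _ (angle_range (orbit pa pb t p))
    (angle_range (orbit pa pb t q))) as Hmono.
  rewrite !plus_INR in Hmono; specialize (Hmono ltac:(lra)); lra.
Qed.

Lemma ab_count_orbits_close p q t :
  p <> (0, 0) -> q <> (0, 0) ->
  (ab_count (itinerary pa pb p) t <= ab_count (itinerary pa pb q) t + 1)%nat.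
Proof.
  intros Hp Hq.
  pose proof (angle_range p); pose proof (angle_range q).
  pose proof (lift_order_preserved p q 0 1 Hp Hq ltac:(simpl; lra) t) as Hord.
  unfold lift in Hord; simpl INR in Hord.
  pose proof (angle_range (orbit pa pb t p)); pose proof (angle_range (orbit pa pb t q)).
  assert (Hlt : (ab_count (itinerary pa pb p) t < ab_count (itinerary pa pb q) t + 2)%nat)
    by (apply INR_lt; rewrite plus_INR; simpl INR; lra).
  lia.
Qed.

End Lift.


(** * Rotation number of a periodic orbit *)

Lemma ratio_unit_interval (c P : nat) : (0 < P)%nat -> (c <= P)%nat -> 0 <= INR c / INR P <= 1.
Proof.
  intros HP HcP; apply lt_0_INR in HP; apply le_INR in HcP; pose proof (pos_INR c).
  split; [unfold Rdiv; apply Rmult_le_pos; [lra | left; apply Rinv_0_lt_compat, HP]|].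
  apply (Rmult_le_reg_r (INR P)); [exact HP|]; unfold Rdiv; rewrite Rmult_assoc, Rinv_l; lra.
Qed.

Lemma count_upto_periodic_deviation g P :
  (0 < P)%nat -> (forall t, g (P + t)%nat = g t) ->
  forall t, Rabs (INR (count_upto g t) - INR (count_upto g P) / INR P * INR t) <= INR P.
Proof.
  intros HP Hper.
  set (r := INR (count_upto g P) / INR P).
  assert (HPpos : 0 < INR P) by (apply lt_0_INR; exact HP).
  assert (HrP : r * INR P = INR (count_upto g P)) by (unfold r; field; lra).
  assert (Hr : 0 <= r <= 1) by (apply ratio_unit_interval; [exact HP | apply count_upto_le]).
  intro t; induction t as [t IH] using lt_wf_ind.
  destruct (Nat.lt_ge_cases t P) as [Hlt | Hge].
  - pose proof (le_INR _ _ (count_upto_le g t)); pose proof (pos_INR (count_upto g t)).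
    apply lt_INR in Hlt; pose proof (pos_INR t).
    apply Rabs_le; split; nra.
  - replace t with (P + (t - P))%nat by lia.
    rewrite count_upto_add, (count_upto_ext (fun s => g (P + s)%nat) g) by exact Hper.
    rewrite !plus_INR.
    replace (INR (count_upto g P) + INR (count_upto g (t - P)) - r * (INR P + INR (t - P)))
      with (INR (count_upto g (t - P)) - r * INR (t - P)) by lra.
    apply IH; lia.
Qed.

Lemma Un_cv_of_bounded_deviation (c : nat -> R) r K :
  (forall N, Rabs (c N - r * INR N) <= K) -> Un_cv (fun N => c N / INR N) r.
Proof.
  intros Hdev eps Heps.
  destruct (INR_archimed eps K Heps) as [N0 HN0].
  exists (S N0); intros N HN; unfold R_dist.
  assert (HNpos : 0 < INR N) by (apply lt_0_INR; lia).
  assert (HNbig : K < INR N * eps).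
  { apply le_INR in HN; rewrite S_INR in HN; nra. }
  specialize (Hdev N).
  replace (c N / INR N - r) with ((c N - r * INR N) * / INR N) by (field; lra).
  rewrite Rabs_mult, Rabs_inv, (Rabs_pos_eq (INR N)) by lra.
  apply (Rmult_lt_reg_r (INR N)); [exact HNpos|].
  rewrite Rmult_assoc, Rinv_l by lra; lra.
Qed.

Lemma rotation_number_of_periodic_orbit pa pb p0 P c :
  p0 <> (0, 0) -> (0 < P)%nat -> orbit pa pb P p0 = p0 ->
  ab_count (itinerary pa pb p0) P = c ->
  rotation_number_is pa pb (INR c / INR P).
Proof.
  intros Hp0 HP Hper Hc p Hp.
  set (g := fun t => is_ab (itinerary pa pb p0 t) (itinerary pa pb p0 (S t))).
  assert (Hgper : forall t, g (P + t)%nat = g t).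
  { intro t; unfold g, itinerary.
    rewrite <- Nat.add_succ_r, !(Nat.add_comm P), !orbit_add, Hper; reflexivity. }
  pose proof (count_upto_periodic_deviation g P HP Hgper) as Hdev.
  change (count_upto g) with (ab_count (itinerary pa pb p0)) in Hdev; rewrite Hc in Hdev.
  assert (Hr : 0 <= INR c / INR P <= 1)
    by (apply ratio_unit_interval; [exact HP | rewrite <- Hc; apply count_upto_le]).
  apply (Un_cv_of_bounded_deviation _ _ (INR P + 2)); intros [|t].
  - unfold count_ab; simpl; rewrite Rmult_0_r, Rminus_0_r, Rabs_R0; pose proof (pos_INR P); lra.
  - rewrite count_ab_itinerary, S_INR.
    pose proof (ab_count_orbits_close pa pb p p0 t Hp Hp0) as H1.
    pose proof (ab_count_orbits_close pa pb p0 p t Hp0 Hp) as H2.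
    apply le_INR in H1, H2; rewrite plus_INR in H1, H2; simpl INR in H1, H2.
    specialize (Hdev t).
    set (d := INR (ab_count (itinerary pa pb p0) t) - INR c / INR P * INR t) in Hdev.
    pose proof (Rle_abs d); pose proof (Rle_abs (- d)); rewrite Rabs_Ropp in *.
    apply Rabs_le; unfold d in *; lra.
Qed.

Theorem mainTheorem17 (kappa l n m : nat) :
  (2 <= kappa)%nat -> (2 <= l)%nat ->
  forall pa pb : R,
    Dbox kappa l pa pb ->
    legal_arc (w_left kappa l n) pa pb ->
    legal_arc (w_right kappa l m) pa pb ->
    rotation_number_is pa pb (vartheta_minus (kappa + l + 1) (n + m + 1)).
Proof.
  intros Hk Hl pa pb _ Hleft Hright.
  destruct kappa as [|k]; [lia|]; destruct l as [|j]; [lia|].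
  destruct (block_words_periodic_orbit pa pb k j n m Hleft Hright) as [Hper Hcount].
  pose proof (length_block_words (S k) (S j) n m) as Hlen.
  set (P := length (w_left (S k) (S j) n ++ w_right (S k) (S j) m)) in *.
  replace (vartheta_minus (S k + S j + 1) (n + m + 1)) with (INR (n + m + 1) / INR P).
  - apply (rotation_number_of_periodic_orbit pa pb (0, -1) P); try assumption.
    + intro E; injection E; lra.
    + nia.
  - unfold vartheta_minus; apply (f_equal INR) in Hlen.
    rewrite (plus_INR P 1), mult_INR in Hlen; simpl (INR 1) in Hlen.
    f_equal; lra.
Qed.
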